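(* Let $X$ be a topological space, $x\in X$, and $\mathcal B\subseteq\wp(X)$. Then the games $G_1(\Omega_{X,x},\mathcal B)$ and $G_1(\mathscr N(x),\neg\mathcal B)$ are dual.
   Context: $\Omega_{X,x}=\{A\subseteq X:x\in\mathrm{cl}_X(A)\}$; $\mathscr N(x)$ is the set of open sets containing $x$. In $G_1(\mathcal E,\mathcal C)$, at each inning $n\in\omega$ One plays $E_n\in\mathcal E$ and Two picks $x_n\in E_n$; Two wins iff $\{x_n:n\in\omega\}\in\mathcal C$; $\neg\mathcal C$ is the complement of $\mathcal C$. A strategy for One maps finite sequences of Two's moves to moves; it is predetermined if it depends only on the inning number. A strategy for Two maps finite sequences $(E_0,\dots,E_n)$ of One's moves to an element of $E_n$; it is Markov if it depends only on $E_n$ and $n$. Games $G,H$ are dual if: One has a winning strategy in $G$ iff Two has one in $H$; One has a winning strategy in $H$ iff Two has one in $G$; One has a winning predetermined strategy in $G$ iff Two has a winning Markov strategy in $H$; and One has a winning predetermined strategy in $H$ iff Two has a winning Markov strategy in $G$. *)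

From HB Require Import structures.
From mathcomp Require Import all_boot all_order.
From mathcomp Require Import all_classical all_reals topology.
Set Implicit Arguments. Unset Strict Implicit. Unset Printing Implicit Defensive.
Local Open Scope classical_set_scope.

(* Selection games G_1(E, C) on a type X: in inning n, One plays E_n \in E,
   Two picks x_n \in E_n; Two wins iff range x \in C. *)
Section Games.
Variable X : Type.

Definition Omega (T : topologicalType) (x : T) : set (set T) :=
  [set A | closure A x].
Definition Nbd (T : topologicalType) (x : T) : set (set T) :=
  [set U | open U /\ U x].

Definition hist (T : Type) (f : nat -> T) (n : nat) : seq T := mkseq f n.

Definition One_has_winning (E C : set (set X)) : Prop :=
  exists sigma : seq X -> set X,
    (forall s, E (sigma s)) /\
    forall x : nat -> X, (forall n, sigma (hist x n) (x n)) -> ~ C (range x).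

Definition Two_has_winning (E C : set (set X)) : Prop :=
  exists tau : seq (set X) -> X,
    forall En : nat -> set X, (forall n, E (En n)) ->
      (forall n, En n (tau (hist En n.+1))) /\
      C (range (fun n => tau (hist En n.+1))).

Definition One_has_winning_predetermined (E C : set (set X)) : Prop :=
  exists sigma : nat -> set X,
    (forall n, E (sigma n)) /\
    forall x : nat -> X, (forall n, sigma n (x n)) -> ~ C (range x).

Definition Two_has_winning_Markov (E C : set (set X)) : Prop :=
  exists tau : set X -> nat -> X,
    (forall A n, E A -> A (tau A n)) /\
    forall En : nat -> set X, (forall n, E (En n)) ->
      C (range (fun n => tau (En n) n)).

Definition dual_games (E1 C1 E2 C2 : set (set X)) : Prop :=
  [/\ One_has_winning E1 C1 <-> Two_has_winning E2 C2,
      One_has_winning E2 C2 <-> Two_has_winning E1 C1,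
      One_has_winning_predetermined E1 C1 <-> Two_has_winning_Markov E2 C2 &
      One_has_winning_predetermined E2 C2 <-> Two_has_winning_Markov E1 C1].
End Games.

From mathcomp Require Import all_boot all_order.
From mathcomp Require Import all_classical all_reals topology.
Local Open Scope classical_set_scope.

(* Every open neighbourhood of x meets every set accumulating at x, and each of
   the families N(x), Omega_{X,x} is a reflection of the other: it has a member
   inside the range of any selector of the other family (the range of a selector
   of N(x) accumulates at x; for a selector f of Omega_{X,x}, the complement of
   the range of f does not contain f of itself, hence does not accumulate at x,
   so the range of f is a neighbourhood of x).  Strategies then transfer between
   the two games: against a move E, Two answers with a point of E inside One's
   answer in the other game; conversely One plays a member of the reflection
   inside the set of possible replies of Two's strategy, and recovers from each
   point chosen a move to which that strategy gives this reply. *)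

Section Answers.
Set Implicit Arguments. Unset Strict Implicit.
Variables (S T : Type) (r : seq T -> S -> T).

Definition answers : seq S -> seq T :=
  foldl (fun ts s => rcons ts (r ts s)) [::].

Definition answer_play (u : nat -> S) (n : nat) : T := r (answers (hist u n)) (u n).

Lemma answers_rcons s a : answers (rcons s a) = rcons (answers s) (r (answers s) a).
Proof. exact: foldl_rcons. Qed.

Lemma answers_hist u n : answers (hist u n) = hist (answer_play u) n.
Proof. by elim: n => [//|n IH]; rewrite /hist !mkseqS answers_rcons; congr rcons. Qed.

Lemma answer_playE u n : answer_play u n = r (hist (answer_play u) n) (u n).
Proof. by rewrite -answers_hist. Qed.

Lemma last_answers_hist t0 u n : last t0 (answers (hist u n.+1)) = answer_play u n.
Proof. by rewrite /hist mkseqS answers_rcons last_rcons. Qed.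

End Answers.

Section SelectionGameDuality.
Set Implicit Arguments. Unset Strict Implicit.
Variable X : Type.
Implicit Types E F C : set (set X).

Definition reflection_of F E :=
  forall f : set X -> X, (forall A, E A -> A (f A)) -> exists2 V, F V & V `<=` f @` E.

Lemma meets_pick E F A0 U0 : E `#` F -> E A0 -> F U0 ->
  exists pick : set X -> set X -> X, forall A U, E A -> F U -> (A `&` U) (pick A U).
Proof.
move=> EF EA0 FU0; have [x0 _] := EF _ _ EA0 FU0.
have /choice[p pP] : forall AU : set X * set X,
    exists y, E AU.1 -> F AU.2 -> (AU.1 `&` AU.2) y.
  move=> [A U]; have [EA|] := pselect (E A); last by exists x0.
  have [FU|] := pselect (F U); last by exists x0.
  by have [y ?] := EF _ _ EA FU; exists y.
by exists (fun A U => p (A, U)) => A U; exact: (pP (A, U)).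
Qed.

Lemma Two_strategy_selects E (tau : seq (set X) -> X) :
  (forall En, (forall n, E (En n)) -> forall n, En n (tau (hist En n.+1))) ->
  forall s U, {subset s <= E} -> E U -> U (tau (rcons s U)).
Proof.
move=> tau_legal s U sE EU.
pose En n := nth U (rcons s U) n.
have En_E n : E (En n).
  rewrite /En; case: (ltnP n (size (rcons s U))) => [lt_n|le_n]; last by rewrite nth_default.
  by move/mem_nth: lt_n => /(_ U); rewrite mem_rcons inE => /predU1P[->|/sE/[!in_setE]].
have := tau_legal En En_E (size s).
by rewrite -(size_rcons s U) /hist mkseq_nth /En nth_rcons ltnn eqxx.
Qed.

Lemma One_winning_Two_winning E F C : E !=set0 -> E `#` F ->
  One_has_winning F C -> Two_has_winning E (~` C).
Proof.
move=> [A0 EA0] EF [sigma [sigmaF sigma_win]].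
have [x0 _] := EF _ _ EA0 (sigmaF [::]).
have [pick pickP] := meets_pick EF EA0 (sigmaF [::]).
pose reply ys U := pick U (sigma ys).
exists (fun s => last x0 (answers reply s)) => En En_E /=.
pose y := answer_play reply En.
have tauE n : last x0 (answers reply (hist En n.+1)) = y n by apply: last_answers_hist.
have yP n : (En n `&` sigma (hist y n)) (y n).
  by rewrite /y answer_playE; apply: pickP.
split=> [n|]; first by rewrite tauE; case: (yP n).
by rewrite (funext tauE); apply: sigma_win => n; case: (yP n).
Qed.

Lemma Two_winning_One_winning E F C : E !=set0 -> reflection_of F E ->
  Two_has_winning E (~` C) -> One_has_winning F C.
Proof.
move=> [e0 Ee0] FE [tau tau_win].
have tau_sel := Two_strategy_selects (fun En En_E => (tau_win En En_E).1).
(* [g (s, a)]: a move in [E] to which [tau] replies [a] after the history [s], if any. *)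
have /choice[g gP] : forall sa : seq (set X) * X, exists U,
    E U /\ (((fun V => tau (rcons sa.1 V)) @` E) sa.2 -> tau (rcons sa.1 U) = sa.2).
  move=> [s a]; have [[U EU <-]|not_reply] := pselect (((fun V => tau (rcons s V)) @` E) a).
    by exists U.
  by exists e0; split=> // /not_reply.
pose rebuild s a := g (s, a).
have rebuild_E p : {subset answers rebuild p <= E}.
  elim/last_ind: p => [//|p a IH] U; rewrite answers_rcons mem_rcons inE.
  by case/predU1P=> [->|/IH//]; rewrite in_setE; case: (gP (answers rebuild p, a)).
have /choice[sigma sigmaP] : forall p : seq X,
    exists V, F V /\ V `<=` (fun U => tau (rcons (answers rebuild p) U)) @` E.
  move=> p; have [V FV sub] := FE _ (fun U => tau_sel _ U (rebuild_E p)).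
  by exists V.
exists sigma; split=> [p|x x_play]; first by case: (sigmaP p).
pose En := answer_play rebuild x.
have En_E n : E (En n) by case: (gP (answers rebuild (hist x n), x n)).
have tauEn n : tau (hist En n.+1) = x n.
  rewrite /hist mkseqS -/(hist _ _) -answers_hist.
  by apply: (gP (_, _)).2; apply: (sigmaP _).2.
by have [_] := tau_win En En_E; rewrite (funext tauEn).
Qed.

Lemma predetermined_winning_Markov_winning E F C : E !=set0 -> E `#` F ->
  One_has_winning_predetermined F C -> Two_has_winning_Markov E (~` C).
Proof.
move=> [A0 EA0] EF [sigma [sigmaF sigma_win]].
have [pick pickP] := meets_pick EF EA0 (sigmaF 0).
exists (fun A n => pick A (sigma n)); split=> [A n EA|En En_E].
  by case: (pickP A (sigma n) EA (sigmaF n)).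
by apply: sigma_win => n; case: (pickP (En n) (sigma n) (En_E n) (sigmaF n)).
Qed.

Lemma Markov_winning_predetermined_winning E F C : reflection_of F E ->
  Two_has_winning_Markov E (~` C) -> One_has_winning_predetermined F C.
Proof.
move=> FE [tau [tau_sel tau_win]].
have /choice[sigma sigmaP] : forall n, exists V, F V /\ V `<=` (tau^~ n) @` E.
  by move=> n; have [V FV sub] := FE _ (tau_sel^~ n); exists V.
exists sigma; split=> [n|x x_play]; first by case: (sigmaP n).
have /choice[En EnP] : forall n, exists A, E A /\ tau A n = x n.
  by move=> n; have [A EA <-] := (sigmaP n).2 _ (x_play n); exists A.
have := tau_win En (fun n => (EnP n).1).
by rewrite (_ : (fun n => tau (En n) n) = x) //; apply: funext => n; case: (EnP n).
Qed.

Lemma dual_games_reflections E F C : E !=set0 -> F !=set0 -> E `#` F ->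
  reflection_of E F -> reflection_of F E -> dual_games E C F (~` C).
Proof.
move=> E0 F0 EF E_refl_F F_refl_E; have FE : F `#` E by rewrite meetsC.
split; split.
- exact: One_winning_Two_winning.
- exact: Two_winning_One_winning.
- by rewrite -[X in Two_has_winning _ X]setCK; apply: One_winning_Two_winning.
- by rewrite -[X in Two_has_winning _ X -> _]setCK; apply: Two_winning_One_winning.
- exact: predetermined_winning_Markov_winning.
- exact: Markov_winning_predetermined_winning.
- by rewrite -[X in Two_has_winning_Markov _ X]setCK; apply: predetermined_winning_Markov_winning.
- by rewrite -[X in Two_has_winning_Markov _ X -> _]setCK; apply: Markov_winning_predetermined_winning.
Qed.

End SelectionGameDuality.

Section Neighbourhoods.
Variables (X : topologicalType) (x : X).

Lemma Omega_meets_Nbd : Omega x `#` Nbd x.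
Proof. by move=> A U clA NU; apply: clA; apply: open_nbhs_nbhs. Qed.

Lemma Omega_reflection_Nbd : reflection_of (Omega x) (Nbd x).
Proof.
move=> f f_sel; exists (f @` Nbd x) => // B; rewrite nbhsE => -[U NU UB].
by exists (f U); split; [exists U | apply: UB; apply: f_sel].
Qed.

Lemma Nbd_reflection_Omega : reflection_of (Nbd x) (Omega x).
Proof.
move=> f f_sel.
have : ~ closure (~` (f @` Omega x)) x.
  by move=> /[dup] /f_sel nf cl; apply: nf; exists (~` (f @` Omega x)).
rewrite closure_setC /= => /contrapT; rewrite /interior /= nbhsE => -[U NU sub].
by exists U.
Qed.

End Neighbourhoods.

Theorem mainTheorem4 (X : topologicalType) (x : X) (B : set (set X)) :
  dual_games (Omega x) B (Nbd x) (~` B).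
Proof.
apply: dual_games_reflections.
- by exists setT => U /nbhs_singleton Ux; exists x.
- by exists setT; split; [exact: openT|].
- exact: Omega_meets_Nbd.
- exact: Omega_reflection_Nbd.
- exact: Nbd_reflection_Omega.
Qed.
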